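(* Let $G$ be a road network with $n$ nodes and maximum degree $\Delta$, with random edge nuances as in the context. Let $i\in[0,h]$, let $B$ be a $4\times4$-cell region of $R_i$, and let $s$ be a node in $B$. Let $\zeta$ (resp. $\zeta'$) be the event that there exists another node $v$ such that the local shortest path from $s$ to $v$ (resp. from $v$ to $s$) in $B$ is not unique. Then $\Pr\{\zeta\vee\zeta'\}\le \binom{\Delta}{2}\cdot 2n/\tau$.
   Context: A road network $G$ is a directed, connected graph of bounded degree with $n$ nodes, each located at a point of the plane, each edge $e$ having positive length $l(e)$; $l(P)$ is the sum of edge lengths along a path. Grids: $R_h$ is a $4\times4$-cell grid tightly covering all nodes; each cell is recursively split into $2\times2$ cells until each cell contains at most one node, giving $h$ grids; for $i\in[0,h]$, $R_i$ denotes the square grid over the same square with $2^{h+2-i}\times2^{h+2-i}$ cells. A $4\times4$-cell region is a block of $4\times4$ consecutive cells. A path is a local path in $B$ if at most one of its edges (as a straight segment) intersects the boundary of $B$. Each edge $e$ receives an independent uniformly random integer nuance $\rho(e)\in\{0,\dots,\tau-1\}$, and $\rho(P)=\sum_{e\in P}\rho(e)$. Path $P_1$ is shorter than $P_2$ if $l(P_1)<l(P_2)$, or $l(P_1)=l(P_2)$ and $\rho(P_1)<\rho(P_2)$. A local shortest path from $s$ to $v$ in $B$ is a local path in $B$ from $s$ to $v$ not beaten in this order by any other such local path; it is not unique if two distinct such paths have equal length and equal nuance. *)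

(* R is an abstract real field; probability is the uniform
   (counting) measure on the finite set of nuance assignments. *)
From HB Require Import structures.
From mathcomp Require Import all_boot all_order all_algebra.
From mathcomp Require Import boolp.

Set Implicit Arguments.
Unset Strict Implicit.
Unset Printing Implicit Defensive.

Import Order.TTheory GRing.Theory Num.Theory.
Local Open Scope ring_scope.

Section RoadNetwork.
Variable R : realFieldType.
Variable V : finType.
Variable adj : rel V.

Definition edge_t := {e : V * V | adj e.1 e.2}.

Definition deg (v : V) : nat := (#|[set w | adj v w]| + #|[set w | adj w v]|)%N.
Definition max_deg : nat := (\max_(v : V) deg v)%N.

Definition connected_graph : Prop :=
  forall u w : V, connect (fun x y => adj x y || adj y x) u w.

(* A path starting at u is u :: p with path adj u p; its edge list: *)
Definition pedges (u : V) (p : seq V) : seq (V * V) := zip (u :: p) p.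

Variable l : V -> V -> R.
Definition plen (u : V) (p : seq V) : R := \sum_(e <- pedges u p) l e.1 e.2.

Variable tau : nat.
(* nuance of an edge (u,w) under an assignment rho (0 if not an edge) *)
Definition enuance (rho : {ffun edge_t -> 'I_tau}) (u w : V) : nat :=
  match @insub _ (fun e : V * V => adj e.1 e.2) edge_t (u, w) with
  | Some e => nat_of_ord (rho e)
  | None => 0%N
  end.
Definition pnuance (rho : {ffun edge_t -> 'I_tau}) (u : V) (p : seq V) : nat :=
  (\sum_(e <- pedges u p) enuance rho e.1 e.2)%N.

Definition shorter rho (u : V) (q p : seq V) : Prop :=
  plen u q < plen u p \/ (plen u q = plen u p /\ (pnuance rho u q < pnuance rho u p)%N).

Variable pos : V -> R * R.

Definition in_box (xl yl c : R) (z : R * R) : bool :=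
  (xl <= z.1 <= xl + c) && (yl <= z.2 <= yl + c).
Definition on_boundary (xl yl c : R) (z : R * R) : bool :=
  in_box xl yl c z &&
  [|| z.1 == xl, z.1 == xl + c, z.2 == yl | z.2 == yl + c].
Definition seg_meets_boundary (xl yl c : R) (a b : R * R) : Prop :=
  exists t : R, 0 <= t <= 1 /\
    on_boundary xl yl c ((1 - t) * a.1 + t * b.1, (1 - t) * a.2 + t * b.2).

Definition edge_meets (xl yl c : R) (e : V * V) : Prop :=
  seg_meets_boundary xl yl c (pos e.1) (pos e.2).

(* u::p is a local path from u to w in the square B = (xl,yl,c):
   a path of G from u to w at most one of whose edges intersects the
   boundary of B (edges are counted by position along the path) *)
Definition local_path (xl yl c : R) (u : V) (p : seq V) (w : V) : Prop :=
  [/\ path adj u p, last u p = w &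
      forall j k : nat, (j < k < size (pedges u p))%N ->
        ~ (edge_meets xl yl c (nth (u, u) (pedges u p) j) /\
           edge_meets xl yl c (nth (u, u) (pedges u p) k))].

Definition local_shortest (rho : {ffun edge_t -> 'I_tau}) (xl yl c : R)
    (u : V) (p : seq V) (w : V) : Prop :=
  local_path xl yl c u p w /\
  forall q, local_path xl yl c u q w -> ~ shorter rho u q p.

Definition lsp_not_unique rho (xl yl c : R) (u w : V) : Prop :=
  exists p q : seq V, p <> q /\
    local_shortest rho xl yl c u p w /\ local_shortest rho xl yl c u q w.

(* 1-D: coordinate z lies in the a-th of m cells of side c starting at x0
   (cells half-open [.,.), the last one closed) *)
Definition in_slab (x0 c : R) (m a : nat) (z : R) : bool :=
  (x0 + a%:R * c <= z) &&
  ((z < x0 + a.+1%:R * c) || ((a.+1 == m) && (z <= x0 + a.+1%:R * c))).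
Definition node_in_cell (x0 y0 c : R) (m a b : nat) (v : V) : bool :=
  in_slab x0 c m a (pos v).1 && in_slab y0 c m b (pos v).2.

(* the square (x0,y0,L) tightly covers all nodes: it contains all nodes and
   its side equals the larger of the x- and y-extents of the nodes *)
Definition tight_square (x0 y0 L : R) : Prop :=
  0 < L /\ (forall v, in_box x0 y0 L (pos v)) /\
  exists u w, (pos w).1 - (pos u).1 = L \/ (pos w).2 - (pos u).2 = L.

Definition ncells (h i : nat) : nat := (2 ^ (h + 2 - i))%N.
Definition cside (L : R) (h i : nat) : R := L / (ncells h i)%:R.

Definition fine_enough (x0 y0 L : R) (k : nat) : Prop :=
  forall a b : nat, (a < 2 ^ (k + 2))%N -> (b < 2 ^ (k + 2))%N ->
  forall u w, node_in_cell x0 y0 (L / (2 ^ (k + 2))%:R) (2 ^ (k + 2)) a b u ->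
              node_in_cell x0 y0 (L / (2 ^ (k + 2))%:R) (2 ^ (k + 2)) a b w ->
              u = w.
(* h = number of recursive 2x2 splittings of the initial 4x4 grid needed
   until every cell contains at most one node *)
Definition grid_height (x0 y0 L : R) (h : nat) : Prop :=
  fine_enough x0 y0 L h /\ forall k, fine_enough x0 y0 L k -> (h <= k)%N.

(* (a,b) is the lower-left cell of a 4x4-cell region of R_i *)
Definition region (h i a b : nat) : Prop :=
  (a + 4 <= ncells h i)%N /\ (b + 4 <= ncells h i)%N.
Definition node_in_region (x0 y0 L : R) (h i a b : nat) (s : V) : Prop :=
  exists a' b', [/\ (a <= a' < a + 4)%N, (b <= b' < b + 4)%N &
    node_in_cell x0 y0 (cside L h i) (ncells h i) a' b' s].
Definition region_xl (x0 L : R) (h i a : nat) : R := x0 + a%:R * cside L h i.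
Definition region_side (L : R) (h i : nat) : R := 4%:R * cside L h i.

Definition zeta rho (xl yl c : R) (s : V) : Prop :=
  exists v, v <> s /\ lsp_not_unique rho xl yl c s v.
Definition zeta' rho (xl yl c : R) (s : V) : Prop :=
  exists v, v <> s /\ lsp_not_unique rho xl yl c v s.

Definition Pr (E : {ffun edge_t -> 'I_tau} -> Prop) : R :=
  #|[set rho : {ffun edge_t -> 'I_tau} | `[< E rho >] ]|%:R /
  (tau ^ #|{: edge_t}|)%N%:R.
End RoadNetwork.

From HB Require Import structures.
From mathcomp Require Import all_boot all_order all_algebra.
From mathcomp Require Import boolp zify.
Import Order.TTheory GRing.Theory Num.Theory.
Local Open Scope ring_scope.
Set Implicit Arguments.
Unset Strict Implicit.
Unset Printing Implicit Defensive.

(* Two distinct local shortest paths from s to v are simple, so they last meet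
   at a node w entered through two distinct edges; their parts up to w are tied
   optimal paths to w within the same boundary budget (0 or 1 crossing edges).
   Fixing the nuances of all other edges, at most one value of the nuance of
   one of these two edges allows such a tie, so the event has probability at
   most 1/tau.  Symmetrically, two local shortest paths from v to s first
   separate at a node w through two distinct edges.  Charging each pair of edges
   at w to the smaller one, a union bound over w, the budget and these
   deg w - 1 <= C(Delta, 2) edges gives the claim. *)

Lemma count_le1_nth (T : Type) (a : pred T) (d : T) (s : seq T) :
  (count a s <= 1)%N <->
  (forall j k : nat, (j < k < size s)%N -> ~ (a (nth d s j) /\ a (nth d s k))).
Proof.
have count0 t : (count a t <= 0)%N = ~~ has a t by rewrite leqn0 has_count lt0n negbK.
split.
- elim: s => [|x s IH] /= H j k; first by rewrite ltn0 andbF.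
  case: j k => [|j] [|k] //= jks.
  + move=> [ax ak]; move: H; rewrite ax add1n ltnS count0 => /negP; apply.
    by apply/(has_nthP d); exists k.
  + case/andP: jks; rewrite !ltnS => jk ks; apply: IH; last by rewrite jk.
    exact: leq_trans (leq_addl _ _) H.
- elim: s => [|x s IH] //= H; case ax: (a x) => /=.
  + rewrite add1n ltnS count0; apply/negP => hs.
    apply: (H 0%N (find a s).+1); first by rewrite /= ltnS -has_find.
    by split=> //=; apply: nth_find.
  + by apply: IH => j k /andP[jk ks]; apply: (H j.+1 k.+1); rewrite /= ltnS jk.
Qed.

Lemma split_at_divergence (T : eqType) (c : T) (a b : seq T) :
  uniq (c :: a) -> uniq (c :: b) -> last c a = last c b -> a <> b ->
  exists r y1 y2 a' b', [/\ a = r ++ y1 :: a', b = r ++ y2 :: b' & y1 <> y2].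
Proof.
elim: a c b => [|x a IH] c [|y b] //=.
- by move=> _ /andP[cb _] e _; case/negP: cb; rewrite e mem_last.
- by move=> /andP[ca _] _ e _; case/negP: ca; rewrite -e mem_last.
- move=> /andP[_ ua] /andP[_ ub] e ne; have [exy|nxy] := eqVneq x y; last first.
    by exists [::], x, y, a, b; split=> //; apply/eqP.
  subst y; have [|r [y1 [y2 [a' [b' [-> -> ?]]]]]] := IH x b ua ub e.
    by move=> eab; apply: ne; rewrite eab.
  by exists (x :: r), y1, y2, a', b'.
Qed.

Lemma split_at_convergence (T : eqType) (s : T) (p q : seq T) :
  uniq (s :: p) -> uniq (s :: q) -> last s p = last s q -> p <> q ->
  exists Q1 Q2 w S,
    [/\ p = Q1 ++ w :: S, q = Q2 ++ w :: S & last s Q1 <> last s Q2].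
Proof.
move=> up uq e ne; set v := last s p.
have revE t : last s t = v -> rev (s :: t) = v :: rev (belast s t).
  by move=> <-; rewrite lastI rev_rcons.
have last_rev t : last s t = v -> last v (rev (belast s t)) = s.
  by case: t => [|x t] /= lt; rewrite ?lt // rev_cons last_rcons.
have [r [y1 [y2 [a' [b' [ep eq ny]]]]]] :
    exists r y1 y2 a' b', [/\ rev (belast s p) = r ++ y1 :: a',
      rev (belast s q) = r ++ y2 :: b' & y1 <> y2].
  apply: (@split_at_divergence _ v).
  - by rewrite -revE // rev_uniq.
  - by rewrite -revE // rev_uniq.
  - by rewrite !last_rev.
  - move/(congr1 rev); rewrite !revK => ebl; apply: ne.
    suff : s :: p = s :: q by case.
    by rewrite (lastI s p) (lastI s q) ebl e.
have [w [S eS]] : exists w S, rcons (rev r) v = w :: S.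
  by case: (rev r) => [|z t] /=; [exists v, [::] | exists z, (rcons t v)].
have split_rev t a y : last s t = v -> rev (belast s t) = r ++ y :: a ->
    exists Q, t = Q ++ w :: S /\ last s Q = y.
  move=> lt ebt; have : s :: t = rcons (rev a) y ++ w :: S.
    by rewrite -[s :: t]revK revE // ebt rev_cons rev_cat rev_cons rcons_cat eS.
  case: (rev a) => [|k K] /=; case=> -> ->; first by exists [::].
  by exists (rcons K y); rewrite cat_rcons last_rcons.
have [Q1 [-> l1]] := split_rev p a' y1 erefl ep.
have [Q2 [-> l2]] := split_rev q b' y2 (esym e) eq.
by exists Q1, Q2, w, S; rewrite l1 l2.
Qed.

Lemma card_ffun_pinned (E0 : finType) (tau : nat) (E : {set {ffun E0 -> 'I_tau}})
    (e0 : E0) :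
  (forall r1 r2, r1 \in E -> r2 \in E ->
     (forall f, f != e0 -> r1 f = r2 f) -> r1 e0 = r2 e0) ->
  (#|E| * tau <= tau ^ #|E0|)%N.
Proof.
move=> pinned.
pose g (x : {ffun E0 -> 'I_tau} * 'I_tau) : {ffun E0 -> 'I_tau} :=
  [ffun f => if f == e0 then x.2 else x.1 f].
have g_inj : {in setX E [set: 'I_tau] &, injective g}.
  move=> [r1 k1] [r2 k2]; rewrite !inE /= !andbT => E1 E2 eg.
  have eg_at f : g (r1, k1) f = g (r2, k2) f by rewrite eg.
  have off_e0 f : f != e0 -> r1 f = r2 f.
    by move=> nf; have := eg_at f; rewrite !ffunE (negbTE nf).
  have := eg_at e0; rewrite !ffunE eqxx /= => ->; congr (_, _).
  apply/ffunP => f; have [->|/off_e0 //] := eqVneq f e0; exact: pinned.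
have := card_in_imset g_inj; rewrite cardsX cardsT card_ord => <-.
by rewrite -[in leqRHS](card_ord tau) -card_ffun max_card.
Qed.

Lemma card_bigcup_le (I T : finType) (P : pred I) (F : I -> {set T}) :
  (#|\bigcup_(i | P i) F i| <= \sum_(i | P i) #|F i|)%N.
Proof.
elim/big_rec2: _ => [|i n U _ leUn]; first by rewrite cards0.
exact: leq_trans (leq_card_setU _ _).1 (leq_add (leqnn _) leUn).
Qed.

(* [A] without its element of largest rank *)
Definition below_max (T : finType) (A : {set T}) : {set T} :=
  [set x in A | [exists y in A, (enum_rank x < enum_rank y)%N]].

Lemma card_below_max (T : finType) (A : {set T}) : (#|below_max A| <= #|A|.-1)%N.
Proof.
have [A0|[x0 Ax0]] := set_0Vmem A.
  rewrite A0 cards0 leqn0 cards_eq0 -subset0.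
  by apply/subsetP => x; rewrite !inE.
have [m Am m_max] := @arg_maxnP T x0 (mem A) (fun x => nat_of_ord (enum_rank x)) Ax0.
have sub : below_max A \subset A :\ m.
  apply/subsetP => x; rewrite !inE => /andP[Ax /exists_inP[y Ay lt_xy]].
  by rewrite Ax andbT; apply: contraTneq lt_xy => ->; rewrite -leqNgt; exact: m_max.
by rewrite (leq_trans (subset_leq_card sub)) // (cardsD1 m A) (_ : m \in A).
Qed.

Lemma below_max_exists (T : finType) (A : {set T}) (P : T -> Prop) x1 x2 :
  x1 != x2 -> x1 \in A -> x2 \in A -> P x1 -> P x2 ->
  exists2 x, x \in below_max A & P x.
Proof.
move=> n12 A1 A2 P1 P2.
have mem_below x y : x \in A -> y \in A -> (enum_rank x < enum_rank y)%N ->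
    x \in below_max A.
  by move=> Ax Ay lt; rewrite inE Ax; apply/exists_inP; exists y.
have [lt|lt|/val_inj/enum_rank_inj e] := ltngtP (enum_rank x1) (enum_rank x2).
- by exists x1 => //; apply: mem_below lt.
- by exists x2 => //; apply: mem_below lt.
- by rewrite e eqxx in n12.
Qed.

Section LocalShortestPaths.
Variables (R : realFieldType) (V : finType) (adj : rel V) (l : V -> V -> R).
Variables (pos : V -> R * R) (tau : nat) (xl yl side : R).
Hypothesis l_gt0 : forall u w, adj u w -> 0 < l u w.
Implicit Types (u v w x y : V) (p q t : seq V) (k : nat).

Local Notation nuances := {ffun edge_t adj -> 'I_tau}.
Implicit Types (rho : nuances).

Lemma pedges_cat u p t : pedges u (p ++ t) = pedges u p ++ pedges (last u p) t.
Proof. by elim: p u => [|x p IH] u /=; [case: t | rewrite -IH]. Qed.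

Lemma pedges_rcons u p x : pedges u (rcons p x) = rcons (pedges u p) (last u p, x).
Proof. by rewrite -cats1 pedges_cat cats1. Qed.

Lemma mem_pedges u p (e : V * V) : e \in pedges u p -> e.1 \in u :: p /\ e.2 \in p.
Proof.
elim: p u => [|x p IH] u //=; rewrite in_cons => /orP[/eqP -> /=|/IH[]].
  by rewrite !mem_head.
by rewrite !in_cons => -> ->; rewrite !orbT.
Qed.

Lemma uniq_pedges u p : uniq p -> uniq (pedges u p).
Proof. exact: zip_uniqr. Qed.

Lemma mem_pedges_into_last u p x w :
  uniq (u :: rcons p w) -> ((x, w) \in pedges u (rcons p w)) = (x == last u p).
Proof.
rewrite /= rcons_uniq mem_rcons in_cons negb_or => /andP[_ /andP[wp _]].
rewrite pedges_rcons mem_rcons in_cons xpair_eqE eqxx andbT.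
case: (x == _) => //; apply/negP => /mem_pedges[_ /=]; exact/negP.
Qed.

Lemma mem_pedges_out_of_head u y p x :
  uniq (u :: y :: p) -> ((u, x) \in pedges u (y :: p)) = (x == y).
Proof.
move=> /andP[up _]; rewrite in_cons xpair_eqE eqxx /=.
case: (x == y) => //; apply/negP => /mem_pedges[/= uyp _]; exact: negP up uyp.
Qed.

Lemma plen_cat u p t : plen l u (p ++ t) = plen l u p + plen l (last u p) t.
Proof. by rewrite /plen pedges_cat big_cat. Qed.

Lemma pnuance_cat rho u p t :
  pnuance rho u (p ++ t) = (pnuance rho u p + pnuance rho (last u p) t)%N.
Proof. by rewrite /pnuance pedges_cat big_cat. Qed.

Lemma plen_ge0 u p : path adj u p -> 0 <= plen l u p.
Proof.
elim: p u => [|x p IH] u /=; first by rewrite /plen big_nil.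
by case/andP=> a pa; rewrite /plen big_cons addr_ge0 ?IH // ltW ?l_gt0.
Qed.

Lemma plen_gt0 u p : path adj u p -> p != [::] -> 0 < plen l u p.
Proof.
case: p => [|x p] //= /andP[a pa] _.
by rewrite /plen big_cons ltr_pwDl ?l_gt0 ?plen_ge0.
Qed.

(* pnuance r2 - pnuance r1 = (r2 e - r1 e) * multiplicity of e, rearranged to
   avoid subtraction *)
Lemma pnuance_perturb (r1 r2 : nuances) (e : edge_t adj) u p :
  (forall f, f != e -> r1 f = r2 f) ->
  (pnuance r1 u p + count_mem (val e) (pedges u p) * r2 e =
   pnuance r2 u p + count_mem (val e) (pedges u p) * r1 e)%N.
Proof.
move=> agree.
have split_e r : pnuance r u p = (count_mem (val e) (pedges u p) * r e +
    \sum_(f <- pedges u p | f != val e) enuance r f.1 f.2)%N.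
  rewrite /pnuance (bigID (pred1 (val e))) /=; congr (_ + _)%N.
  rewrite (eq_bigr (fun=> nat_of_ord (r e))) => [|f /eqP ->].
    by rewrite big_const_seq iter_addn_0 mulnC.
  by rewrite /enuance -surjective_pairing valK.
have off_e : (\sum_(f <- pedges u p | f != val e) enuance r1 f.1 f.2 =
              \sum_(f <- pedges u p | f != val e) enuance r2 f.1 f.2)%N.
  apply: eq_bigr => f nf; rewrite /enuance -surjective_pairing.
  by case: insubP => // f' _ ef'; rewrite agree // -(inj_eq val_inj) ef'.
by rewrite !split_e off_e; lia.
Qed.

Definition crosses (e : V * V) : bool := `[< edge_meets pos xl yl side e >].
Definition ncross u p : nat := count crosses (pedges u p).

Lemma ncross_cat u p t : ncross u (p ++ t) = (ncross u p + ncross (last u p) t)%N.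
Proof. by rewrite /ncross pedges_cat count_cat. Qed.

Definition budget_path u v k p : bool :=
  [&& path adj u p, last u p == v & (ncross u p <= k)%N].

Definition optimal rho u v k p : Prop :=
  budget_path u v k p /\ forall q, budget_path u v k q -> ~ shorter l rho u q p.

Lemma local_pathE u p w :
  local_path adj pos xl yl side u p w <-> budget_path u w 1 p.
Proof.
rewrite /budget_path /ncross; split=> [[-> -> nocross]|/and3P[pa /eqP lp]].
  rewrite eqxx; apply/(count_le1_nth _ (u, u)) => j k jk [cj ck].
  by apply: (nocross j k jk); split; apply/asboolP.
move/(count_le1_nth _ (u, u)) => nocross; split=> // j k jk [cj ck].
by apply: (nocross j k jk); split; apply/asboolP.
Qed.

Lemma local_shortestE rho u p w :
  local_shortest l pos rho xl yl side u p w <-> optimal rho u w 1 p.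
Proof.
split=> [[/local_pathE lp opt]|[lp opt]]; split=> //.
- by move=> q /local_pathE; apply: opt.
- exact/local_pathE.
- by move=> q /local_pathE; apply: opt.
Qed.

Lemma shortcut u p : path adj u p ->
  exists2 p', [/\ uniq (u :: p'), path adj u p', last u p' = last u p
                & (ncross u p' <= ncross u p)%N]
            & p' = p \/ plen l u p' < plen l u p.
Proof.
elim: p u => [|x p IH] u /=; first by exists [::]; [split | left].
case/andP=> a pa; have [r [ur pr lr nr] hr] := IH x pa.
have le_r : plen l u (x :: r) <= plen l u (x :: p).
  by rewrite /plen !big_cons lerD2l; case: hr => [->|/ltW].
have pur : path adj u (x :: r) by rewrite /= a.
have nur : (ncross u (x :: r) <= ncross u (x :: p))%N.
  by rewrite /ncross /= leq_add2l.
have [ui|un] := boolP (u \in x :: r); last first.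
  exists (x :: r); first by split; rewrite //= ?un.
  by case: hr => [->|lt]; [left | right; rewrite /plen !big_cons ltrD2l].
have lur : last u (x :: r) = last u (x :: p) by [].
case/splitPr: ui ur pur lur nur le_r => r1 r2.
rewrite -cat_rcons => ur pur lur nur le_r.
move: pur; rewrite cat_path last_rcons => /andP[pcycle pr2].
move: ur; rewrite cat_uniq => /and3P[_ /hasPn r2_cycle ur2].
have ur2' : u \notin r2 by apply/negP => /r2_cycle; rewrite mem_rcons mem_head.
exists r2.
- split; rewrite /= ?ur2' //; first by rewrite last_cat last_rcons in lur.
  by apply: leq_trans nur; rewrite ncross_cat last_rcons leq_addl.
- right; apply: lt_le_trans le_r; rewrite plen_cat last_rcons ltr_pwDl ?plen_ge0 //.
  by apply: plen_gt0; rewrite // -size_eq0 size_rcons.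
Qed.

Lemma optimal_uniq rho u v k p : optimal rho u v k p -> uniq (u :: p).
Proof.
case=> /and3P[pa lp np] opt; have [p' [up' pa' lp' np'] [<- //|lt]] := shortcut pa.
by case: (opt p'); [rewrite /budget_path pa' lp' lp (leq_trans np') | left].
Qed.

Lemma shorter_catr rho u p q t : last u p = last u q ->
  shorter l rho u p q -> shorter l rho u (p ++ t) (q ++ t).
Proof.
rewrite /shorter !plen_cat !pnuance_cat => -> [lt|[eq lt]]; first by left; rewrite ltrD2r.
by right; rewrite eq ltn_add2r.
Qed.

Lemma shorter_catl rho u t p q :
  shorter l rho (last u t) p q -> shorter l rho u (t ++ p) (t ++ q).
Proof.
rewrite /shorter !plen_cat !pnuance_cat => -[lt|[eq lt]]; first by left; rewrite ltrD2l.
by right; rewrite eq ltn_add2l.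
Qed.

Lemma optimal_prefix rho u v k p t : optimal rho u v k (p ++ t) ->
  optimal rho u (last u p) (k - ncross (last u p) t) p.
Proof.
case=> /and3P[]; rewrite cat_path last_cat ncross_cat => /andP[pp pt] lt nc opt.
split=> [|q /and3P[pq /eqP lq nq] sh]; first by rewrite /budget_path pp eqxx; lia.
apply: (opt (q ++ t)); last exact: shorter_catr.
by rewrite /budget_path cat_path last_cat ncross_cat lq pq pt lt; lia.
Qed.

Lemma optimal_suffix rho u v k p t : optimal rho u v k (p ++ t) ->
  optimal rho (last u p) v (k - ncross u p) t.
Proof.
case=> /and3P[]; rewrite cat_path last_cat ncross_cat => /andP[pp pt] lt nc opt.
split=> [|q /and3P[pq lq nq] sh]; first by rewrite /budget_path pt lt; lia.
apply: (opt (p ++ q)); last exact: shorter_catl.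
by rewrite /budget_path cat_path last_cat ncross_cat pq pp lq; lia.
Qed.

Lemma not_shorter_le rho u p q : ~ shorter l rho u q p ->
  plen l u p <= plen l u q /\
  (plen l u p = plen l u q -> (pnuance rho u p <= pnuance rho u q)%N).
Proof.
move=> nsh; split=> [|eq].
  by rewrite leNgt; apply/negP => lt; apply: nsh; left.
by rewrite leqNgt; apply/negP => lt; apply: nsh; right.
Qed.

Lemma optimal_tie rho u v k p q : optimal rho u v k p -> optimal rho u v k q ->
  plen l u p = plen l u q /\ pnuance rho u p = pnuance rho u q.
Proof.
move=> [bp op] [bq oq].
have [le_pq le_npq] := not_shorter_le (op q bq).
have [le_qp le_nqp] := not_shorter_le (oq p bp).
have eq : plen l u p = plen l u q by apply/le_anti; rewrite le_pq le_qp.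
by split=> //; apply/eqP; rewrite eqn_leq le_npq ?le_nqp.
Qed.

(* The paths avoiding e cost the same under r1 and r2, so both pairs tie at the
   same value; comparing p1 and q1 under each assignment then pins the nuance
   of e. *)
Lemma optimal_pinned (r1 r2 : nuances) (e : edge_t adj) u v k p1 p2 q1 q2 :
  (forall f, f != e -> r1 f = r2 f) ->
  optimal r1 u v k p1 -> optimal r1 u v k p2 ->
  optimal r2 u v k q1 -> optimal r2 u v k q2 ->
  val e \in pedges u p1 -> val e \in pedges u q1 ->
  val e \notin pedges u p2 -> val e \notin pedges u q2 -> r1 e = r2 e.
Proof.
move=> agree O1 O2 O3 O4 ep1 eq1 ep2 eq2.
have once p : uniq (u :: p) -> val e \in pedges u p ->
    (pnuance r1 u p + r2 e = pnuance r2 u p + r1 e)%N.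
  move=> /andP[_ /(uniq_pedges u) up] ep.
  by have := pnuance_perturb u p agree; rewrite count_uniq_mem // ep !mul1n.
have never p : val e \notin pedges u p -> pnuance r1 u p = pnuance r2 u p.
  by move=> /count_memPn ep; have := pnuance_perturb u p agree; rewrite ep !mul0n !addn0.
have [_ N12] := optimal_tie O1 O2.
have [_ N34] := optimal_tie O3 O4.
have [l24 n24] := not_shorter_le (O2.2 _ O4.1).
have [l42 n42] := not_shorter_le (O4.2 _ O2.1).
have [l13 n13] := not_shorter_le (O1.2 _ O3.1).
have [l31 n31] := not_shorter_le (O3.2 _ O1.1).
have e24 : plen l u p2 = plen l u q2 by apply/le_anti; rewrite l24 l42.
have e13 : plen l u p1 = plen l u q1 by apply/le_anti; rewrite l13 l31.
have := n24 e24; have := n42 (esym e24); have := n13 e13; have := n31 (esym e13).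
have := once p1 (optimal_uniq O1) ep1; have := once q1 (optimal_uniq O3) eq1.
have := never p2 ep2; have := never q2 eq2.
move=> *; apply: ord_inj; lia.
Qed.

Definition tie_event u v k (e : V * V) : {set nuances} :=
  [set rho | `[< exists p q, [/\ optimal rho u v k p, optimal rho u v k q,
                                e \in pedges u p & e \notin pedges u q] >]].

Lemma card_tie_event u v k x y : adj x y ->
  (#|tie_event u v k (x, y)| * tau <= tau ^ #|{: edge_t adj}|)%N.
Proof.
move=> a; apply: (card_ffun_pinned (e0 := Sub (x, y) a)) => r1 r2.
rewrite !inE => /asboolP[p1 [p2 [O1 O2 e1 e2]]] /asboolP[q1 [q2 [O3 O4 e3 e4]]] agree.
exact: optimal_pinned agree O1 O2 O3 O4 e1 e3 e2 e4.
Qed.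

Lemma optimal_ends rho u v k p : optimal rho u v k p -> last u p = v.
Proof. by case=> /and3P[_ /eqP]. Qed.

Lemma tie_into_node rho s v : lsp_not_unique l pos rho xl yl side s v ->
  exists w (k : 'I_2),
    exists2 x, x \in below_max [set x | adj x w] & rho \in tie_event s w k (x, w).
Proof.
case=> p [q [ne [/local_shortestE Op /local_shortestE Oq]]].
have [Q1 [Q2 [w [S [ep eq ne_last]]]]] := split_at_convergence (optimal_uniq Op)
  (optimal_uniq Oq) (etrans (optimal_ends Op) (esym (optimal_ends Oq))) ne.
have k_lt2 : (1 - ncross w S < 2)%N by rewrite ltnS leq_subr.
have prefix_opt Q : p = Q ++ w :: S \/ q = Q ++ w :: S ->
    optimal rho s w (Ordinal k_lt2) (rcons Q w).
  rewrite -cat_rcons => -[epq|epq]; [move: Op | move: Oq];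
    by rewrite epq => /optimal_prefix; rewrite last_rcons.
have O1 := prefix_opt Q1 (or_introl ep); have O2 := prefix_opt Q2 (or_intror eq).
have edgeE Q : optimal rho s w (Ordinal k_lt2) (rcons Q w) ->
    forall x, ((x, w) \in pedges s (rcons Q w)) = (x == last s Q).
  by move=> /optimal_uniq uQ x; apply: mem_pedges_into_last.
have into_w Q : optimal rho s w (Ordinal k_lt2) (rcons Q w) -> last s Q \in [set x | adj x w].
  by case=> /and3P[+ _ _]; rewrite rcons_path inE => /andP[].
exists w, (Ordinal k_lt2); apply: (below_max_exists (P := fun x =>
  rho \in tie_event s w (Ordinal k_lt2) (x, w)) (x1 := last s Q1) (x2 := last s Q2)).
- exact/eqP.
- exact: into_w O1.
- exact: into_w O2.
- rewrite inE; apply/asboolP; exists (rcons Q1 w), (rcons Q2 w).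
  by rewrite !edgeE // eqxx (negbTE (introN eqP ne_last)).
- rewrite inE; apply/asboolP; exists (rcons Q2 w), (rcons Q1 w).
  by rewrite !edgeE // eqxx eq_sym (negbTE (introN eqP ne_last)).
Qed.

Lemma tie_out_of_node rho s v : lsp_not_unique l pos rho xl yl side v s ->
  exists w (k : 'I_2),
    exists2 y, y \in below_max [set y | adj w y] & rho \in tie_event w s k (w, y).
Proof.
case=> p [q [ne [/local_shortestE Op /local_shortestE Oq]]].
have [r [y1 [y2 [a1 [a2 [ep eq ne_next]]]]]] := split_at_divergence (optimal_uniq Op)
  (optimal_uniq Oq) (etrans (optimal_ends Op) (esym (optimal_ends Oq))) ne.
set w := last v r.
have k_lt2 : (1 - ncross v r < 2)%N by rewrite ltnS leq_subr.
have suffix_opt y a : p = r ++ y :: a \/ q = r ++ y :: a ->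
    optimal rho w s (Ordinal k_lt2) (y :: a).
  by case=> epq; [move: Op | move: Oq]; rewrite epq => /optimal_suffix.
have O1 := suffix_opt y1 a1 (or_introl ep); have O2 := suffix_opt y2 a2 (or_intror eq).
have edgeE y a : optimal rho w s (Ordinal k_lt2) (y :: a) ->
    forall x, ((w, x) \in pedges w (y :: a)) = (x == y).
  by move=> /optimal_uniq ua x; apply: mem_pedges_out_of_head.
have out_of_w y a : optimal rho w s (Ordinal k_lt2) (y :: a) -> y \in [set y | adj w y].
  by case=> /and3P[/andP[a_wy _] _ _]; rewrite inE.
exists w, (Ordinal k_lt2); apply: (below_max_exists (P := fun y =>
  rho \in tie_event w s (Ordinal k_lt2) (w, y)) (x1 := y1) (x2 := y2)).
- exact/eqP.
- exact: out_of_w O1.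
- exact: out_of_w O2.
- rewrite inE; apply/asboolP; exists (y1 :: a1), (y2 :: a2).
  by rewrite !edgeE // eqxx (negbTE (introN eqP ne_next)).
- rewrite inE; apply/asboolP; exists (y2 :: a2), (y1 :: a1).
  by rewrite !edgeE // eqxx eq_sym (negbTE (introN eqP ne_next)).
Qed.

Lemma card_zeta_or_zeta' s :
  (#|[set rho : nuances | `[< zeta l pos rho xl yl side s \/ zeta' l pos rho xl yl side s >]]|
     * tau <=
   \sum_(w : V) 2 * ((#|below_max [set x | adj x w]| + #|below_max [set y | adj w y]|)
                       * tau ^ #|{: edge_t adj}|))%N.
Proof.
set T := (tau ^ _)%N.
pose ties w (k : 'I_2) :=
  (\bigcup_(x in below_max [set x | adj x w]) tie_event s w k (x, w)) :|:
  (\bigcup_(y in below_max [set y | adj w y]) tie_event w s k (w, y)).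
have cover : [set rho : nuances | `[< zeta l pos rho xl yl side s \/
                                      zeta' l pos rho xl yl side s >]]
               \subset \bigcup_(w : V) \bigcup_(k : 'I_2) ties w k.
  apply/subsetP => rho; rewrite inE => /asboolP[[v [_ /tie_into_node]]|
                                               [v [_ /tie_out_of_node]]] [w [k [x xS xE]]];
    apply/bigcupP; exists w => //; apply/bigcupP; exists k => //; rewrite inE.
    by apply/orP; left; apply/bigcupP; exists x.
  by apply/orP; right; apply/bigcupP; exists x.
have card_union (A : {set V}) (F : V -> {set nuances}) :
    (forall x, x \in A -> #|F x| * tau <= T)%N ->
    (#|\bigcup_(x in A) F x| * tau <= #|A| * T)%N.
  move=> cardF; apply: leq_trans (leq_mul (card_bigcup_le _ _) (leqnn _)) _.
  by rewrite big_distrl -sum_nat_const leq_sum.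
have card_ties w (k : 'I_2) :
    (#|ties w k| * tau <= (#|below_max [set x | adj x w]| +
                           #|below_max [set y | adj w y]|) * T)%N.
  rewrite mulnDl; apply: leq_trans (leq_mul (leq_card_setU _ _).1 (leqnn _)) _.
  rewrite mulnDl; apply: leq_add; apply: card_union => x;
    rewrite !inE => /andP[a _]; exact: card_tie_event.
apply: leq_trans (leq_mul (subset_leq_card cover) (leqnn tau)) _.
apply: leq_trans (leq_mul (card_bigcup_le _ _) (leqnn _)) _.
rewrite big_distrl leq_sum // => w _.
apply: leq_trans (leq_mul (card_bigcup_le _ _) (leqnn _)) _.
rewrite big_distrl (leq_trans (leq_sum _ (fun (k : 'I_2) _ => card_ties w k))) //.
by rewrite sum_nat_const card_ord.
Qed.

End LocalShortestPaths.

Lemma pred_le_bin2 k : (k.-1 <= 'C(k, 2))%N.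
Proof. by case: k => [|k] //; rewrite binS bin1 leq_addl. Qed.

Lemma card_below_max_neighbours (V : finType) (adj : rel V) w :
  (#|below_max [set x | adj x w]| + #|below_max [set y | adj w y]| <=
   'C(max_deg adj, 2))%N.
Proof.
have := card_below_max [set x | adj x w]; have := card_below_max [set y | adj w y].
have deg_le : (deg adj w <= max_deg adj)%N by apply: leq_bigmax.
have := leq_trans (pred_le_bin2 (deg adj w)) (leq_bin2l 2 deg_le).
rewrite /deg; lia.
Qed.

Theorem lemma6 (R : realFieldType) (V : finType) (adj : rel V)
    (l : V -> V -> R) (pos : V -> R * R) (tau : nat)
    (x0 y0 L : R) (h i a b : nat) (s : V) :
  connected_graph adj ->
  (forall u w, adj u w -> 0 < l u w) ->
  (0 < tau)%N ->
  tight_square pos x0 y0 L ->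
  grid_height pos x0 y0 L h ->
  (i <= h)%N ->
  region h i a b ->
  node_in_region pos x0 y0 L h i a b s ->
  let xl := region_xl x0 L h i a in
  let yl := region_xl y0 L h i b in
  let c := region_side L h i in
  Pr R (adj:=adj) (tau:=tau) (fun rho => zeta l pos rho xl yl c s \/ zeta' l pos rho xl yl c s)
  <= 'C(max_deg adj, 2)%:R * (2 * #|V|)%N%:R / tau%:R.
Proof.
move=> _ l_gt0 tau_gt0 _ _ _ _ _ /=.
rewrite /Pr ler_pdivrMr ?ltr0n ?expn_gt0 ?tau_gt0 // mulrAC ler_pdivlMr ?ltr0n //.
rewrite -!natrM ler_nat (leq_trans (card_zeta_or_zeta' pos tau _ _ _ l_gt0 s)) //.
set T := (tau ^ _)%N.
apply: leq_trans (leq_sum _ (fun w _ => leq_mul (leqnn 2)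
         (leq_mul (card_below_max_neighbours adj w) (leqnn T)))) _.
by rewrite sum_nat_const (eq_card (B := V)) //; lia.
Qed.
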